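(* Let $\ell\in\{1,2\}$ and let ${\cal H}\subset{\cal H}_0$, $a_\ell$, $C_{{\rm G1},\ell}$, $C_{{\rm G2},\ell}$, ${\mathcal A}_\ell$ be as in the context (the standing assumptions there hold). If ${\mathcal A}_\ell^{-1}:{\cal H}^*\to{\cal H}$ exists, then $$\|{\mathcal A}_\ell^{-1}\|_{{\cal H}_0\to{\cal H}}\le\|{\mathcal A}_\ell^{-1}\|_{{\cal H}^*\to{\cal H}}\le (C_{{\rm G1},\ell})^{-1}\Big(1+C_{{\rm G2},\ell}\|{\mathcal A}_\ell^{-1}\|_{{\cal H}_0\to{\cal H}}\Big)$$ and $$\|{\mathcal A}_\ell^{-1}\|_{{\cal H}_0\to{\cal H}_0}\le\|{\mathcal A}_\ell^{-1}\|_{{\cal H}_0\to{\cal H}}\le (C_{{\rm G1},\ell})^{-1/2}\|{\mathcal A}_\ell^{-1}\|_{{\cal H}_0\to{\cal H}_0}\sqrt{C_{{\rm G2},\ell}+\|{\mathcal A}_\ell^{-1}\|_{{\cal H}_0\to{\cal H}_0}^{-1}}.$$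
   Context: Standing assumptions: ${\cal H}\subset{\cal H}_0$ are complex Hilbert spaces with $\|v\|_{{\cal H}_0}\le\|v\|_{{\cal H}}$ for $v\in{\cal H}$, and ${\cal H}_0$ is identified with its dual so that ${\cal H}\subset{\cal H}_0\subset{\cal H}^*$. ${\mathcal D}:{\cal H}\to{\cal H}_0$ is linear with $\|{\mathcal D}\|_{{\cal H}\to{\cal H}_0}\le 1$; $b(\cdot,\cdot)$ is a continuous sesquilinear form on ${\cal H}$; for $\ell=1,2$, $\mu_\ell^{-1}:{\cal H}_0\to{\cal H}_0$ and $\epsilon_\ell:{\cal H}_0\to{\cal H}_0$ are bounded linear operators, and $a_\ell(u,v):=(\mu_\ell^{-1}{\mathcal D}u,{\mathcal D}v)_{{\cal H}_0}+b(u,v)-(\epsilon_\ell u,v)_{{\cal H}_0}$. For $\ell=1,2$ there exist $C_{{\rm G1},\ell},C_{{\rm G2},\ell}>0$ with $|a_\ell(v,v)+C_{{\rm G2},\ell}\|v\|_{{\cal H}_0}^2|\ge C_{{\rm G1},\ell}\|v\|_{{\cal H}}^2$ for all $v\in{\cal H}$. ${\mathcal A}_\ell:{\cal H}\to{\cal H}^*$ is defined by $\langle{\mathcal A}_\ell u,v\rangle_{{\cal H}^*\times{\cal H}}=a_\ell(u,v)$. For $X\in\{{\cal H}^*,{\cal H}_0\}$, $Y\in\{{\cal H},{\cal H}_0\}$, $\|{\mathcal A}_\ell^{-1}\|_{X\to Y}$ denotes the operator norm of ${\mathcal A}_\ell^{-1}$ restricted to $X$ (using ${\cal H}_0\subset{\cal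 H}^*$) and measured in $Y$. *)

From HB Require Import structures.
From mathcomp Require Import all_boot all_order all_algebra.
From mathcomp Require Import classical_sets reals complex.
Set Implicit Arguments. Unset Strict Implicit. Unset Printing Implicit Defensive.
Import Order.TTheory GRing.Theory Num.Theory.
Local Open Scope ring_scope.
Local Open Scope classical_set_scope.

Section Hilbert.
Variable R : realType.
Local Notation C := (R[i]).

Definition cconj (z : C) : C := conjc z.
Definition cabs (z : C) : R := ComplexField.Normc.normc z.

Definition clinear (U W : lmodType C) (f : U -> W) : Prop :=
  forall (c : C) (u v : U), f (c *: u + v) = c *: f u + f v.
Definition cantilinear (U : lmodType C) (f : U -> C) : Prop :=
  forall (c : C) (u v : U), f (c *: u + v) = cconj c * f u + f v.

Definition inner_product (V : lmodType C) (ip : V -> V -> C) : Prop :=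
  [/\ forall w, clinear (fun u => ip u w),
      forall u v, ip u v = cconj (ip v u),
      forall v, complex.Im (ip v v) = 0 /\ 0 <= complex.Re (ip v v)
    & forall v, ip v v = 0 -> v = 0].

Definition ipnorm (V : lmodType C) (ip : V -> V -> C) (v : V) : R :=
  Num.sqrt (complex.Re (ip v v)).

Definition ip_complete (V : lmodType C) (ip : V -> V -> C) : Prop :=
  forall u : nat -> V,
    (forall e : R, 0 < e -> exists N : nat, forall m n : nat,
        (N <= m)%N -> (N <= n)%N -> ipnorm ip (u m - u n) < e) ->
    exists l : V, forall e : R, 0 < e -> exists N : nat, forall n : nat,
        (N <= n)%N -> ipnorm ip (u n - l) < e.

Definition hilbert (V : lmodType C) (ip : V -> V -> C) : Prop :=
  inner_product ip /\ ip_complete ip.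

Definition bounded_op (U W : lmodType C) (ipU : U -> U -> C) (ipW : W -> W -> C)
  (f : U -> W) : Prop :=
  clinear f /\ exists M : R, forall u, ipnorm ipW (f u) <= M * ipnorm ipU u.

(* H^* : bounded antilinear functionals on H (so that <Au, v> = a(u, v)
   with a sesquilinear, and H0 embeds via f |-> (f, .)_{H0}) *)
Definition in_dual (V : lmodType C) (ip : V -> V -> C) (f : V -> C) : Prop :=
  cantilinear f /\ exists M : R, forall v, cabs (f v) <= M * ipnorm ip v.

Definition dual_norm (V : lmodType C) (ip : V -> V -> C) (f : V -> C) : R :=
  sup [set cabs (f v) / ipnorm ip v | v in [set v : V | v <> 0]].

(* the embedding H0 -> H^*, f |-> (f, J .)_{H0} where J : H -> H0 is the inclusion *)
Definition embed0 (V V0 : lmodType C) (ip0 : V0 -> V0 -> C) (J : V -> V0)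
  (f : V0) : V -> C := fun v => ip0 f (J v).

Definition aform (V V0 : lmodType C) (ip0 : V0 -> V0 -> C) (J D : V -> V0)
  (b : V -> V -> C) (muinv eps : V0 -> V0) (u v : V) : C :=
  ip0 (muinv (D u)) (D v) + b u v - ip0 (eps (J u)) (J v).

Definition opnorm_dual_H (V : lmodType C) (ip : V -> V -> C)
  (Ainv : (V -> C) -> V) : R :=
  sup [set ipnorm ip (Ainv f) / dual_norm ip f
      | f in [set f | in_dual ip f /\ f <> (fun _ => 0)]].

Definition opnorm_0_H (V V0 : lmodType C) (ip : V -> V -> C)
  (ip0 : V0 -> V0 -> C) (J : V -> V0) (Ainv : (V -> C) -> V) : R :=
  sup [set ipnorm ip (Ainv (embed0 ip0 J f)) / ipnorm ip0 f
      | f in [set f : V0 | f <> 0]].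

Definition opnorm_0_0 (V V0 : lmodType C) (ip0 : V0 -> V0 -> C) (J : V -> V0)
  (Ainv : (V -> C) -> V) : R :=
  sup [set ipnorm ip0 (J (Ainv (embed0 ip0 J f))) / ipnorm ip0 f
      | f in [set f : V0 | f <> 0]].

End Hilbert.

(* Gårding's inequality makes [t := a + C_G2 (J _, J _)_{H0}] coercive on H, so by the
   Lax-Milgram theorem (a consequence of the projection theorem and the Riesz
   representation theorem) every f in H^* is [t w _] for some w with
   C_G1 ||w||_H <= ||f||_{H^*}.  As A (w + C_G2 A^{-1} (J w)) = f, this gives
   ||A^{-1} f||_H <= (1 + C_G2 ||A^{-1}||_{H0->H}) ||w||_H, the second inequality.
   For the fourth, u := A^{-1} g with g in H0 satisfies, again by Gårding,
   C_G1 ||u||_H^2 <= ||g||_{H0} ||u||_{H0} + C_G2 ||u||_{H0}^2, and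
   ||u||_{H0} <= ||A^{-1}||_{H0->H0} ||g||_{H0}.  The other two inequalities only use
   ||.||_{H^*} <= ||.||_{H0} <= ||.||_H. *)
From HB Require Import structures.
From mathcomp Require Import all_boot all_order all_algebra.
From mathcomp Require Import boolp classical_sets reals complex.
From mathcomp Require Import ring lra.
Set Implicit Arguments. Unset Strict Implicit. Unset Printing Implicit Defensive.
Import Order.TTheory GRing.Theory Num.Theory.
Local Open Scope ring_scope.
Local Open Scope classical_set_scope.

Local Notation Re := complex.Re.
Local Notation Im := complex.Im.

Section ComplexModulus.
Variable R : realType.
Implicit Types z : R[i].

Lemma scalecE (c z : R[i]) : c *: z = c * z.
Proof. by []. Qed.

Lemma cabs_sqr z : cabs z ^+ 2 = Re z ^+ 2 + Im z ^+ 2.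
Proof. by case: z => a b; rewrite /cabs /= sqr_sqrtr // addr_ge0 // sqr_ge0. Qed.

Lemma cabs_ge0 z : 0 <= cabs z.
Proof. by case: z => a b; apply: sqrtr_ge0. Qed.

Lemma cabs0 : cabs (0 : R[i]) = 0.
Proof. exact: ComplexField.Normc.normc0. Qed.

Lemma cabs_eq0 z : cabs z = 0 -> z = 0.
Proof. exact: ComplexField.Normc.eq0_normc. Qed.

Lemma cabsM z y : cabs (z * y) = cabs z * cabs y.
Proof. exact: ComplexField.Normc.normcM. Qed.

Lemma cabsN z : cabs (- z) = cabs z.
Proof. exact: normcN. Qed.

Lemma ler_cabsD z y : cabs (z + y) <= cabs z + cabs y.
Proof. exact: le_normcD. Qed.

Lemma cabs_real (k : R) : cabs k%:C%C = `|k|.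
Proof. by rewrite /cabs /= expr0n addr0 sqrtr_sqr. Qed.

Lemma Re_le_cabs z : Re z <= cabs z.
Proof.
case: z => a b; rewrite /cabs /= (le_trans (ler_norm a)) // -sqrtr_sqr.
by rewrite ler_wsqrtr // lerDl sqr_ge0.
Qed.

Lemma mulc_conjc z : z * conjc z = (cabs z ^+ 2)%:C%C.
Proof.
rewrite cabs_sqr; case: z => a b; apply/eqP; rewrite eq_complex /=.
by apply/andP; split; apply/eqP; ring.
Qed.

End ComplexModulus.

Lemma ler_sqr_nneg (R : numDomainType) (x y : R) : 0 <= x -> x <= y -> x ^+ 2 <= y ^+ 2.
Proof. by move=> x_ge0 le_xy; apply: lerXn2r; rewrite ?nnegrE // (le_trans x_ge0). Qed.

Section RealFacts.
Context {R : realType}.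

Lemma exists_invS_lt (e : R) : 0 < e -> exists k : nat, k.+1%:R^-1 < e.
Proof. by move=> /ltr_add_invr [k]; rewrite add0r; exists k. Qed.

Lemma invS_gt0 (n : nat) : 0 < n.+1%:R^-1 :> R.
Proof. by rewrite invr_gt0 ltr0Sn. Qed.

Lemma lef_invS (k n : nat) : (k <= n)%N -> n.+1%:R^-1 <= k.+1%:R^-1 :> R.
Proof. by move=> le_kn; rewrite lef_pV2 ?posrE ?ltr0Sn // ler_nat. Qed.

Lemma invS_le1 (n : nat) : n.+1%:R^-1 <= 1 :> R.
Proof. by have := @lef_invS 0 n (leq0n n); rewrite invr1. Qed.

Variables (T : Type) (P : set T) (F : T -> R).

(* [0 <= M] covers an empty [P], for which the supremum is [sup set0 = 0]. *)
Lemma sup_image_le (M : R) : 0 <= M -> (forall t, P t -> F t <= M) ->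
  sup [set F t | t in P] <= M.
Proof.
move=> M_ge0 F_le; have [[y Py]|FP0] := pselect ([set F t | t in P] !=set0).
  by apply: ge_sup => [|_ [t Pt <-]]; [exists y | exact: F_le].
suff -> : [set F t | t in P] = set0 by rewrite sup0.
by apply/seteqP; split => // y Py; apply: FP0; exists y.
Qed.

Lemma le_sup_image (M : R) t : (forall t, P t -> F t <= M) -> P t ->
  F t <= sup [set F t | t in P].
Proof.
move=> F_le Pt; apply: ub_le_sup; last by exists t.
by exists M => _ [t' Pt' <-]; exact: F_le.
Qed.

Lemma sup_image_ge0 : (forall t, P t -> 0 <= F t) -> 0 <= sup [set F t | t in P].
Proof.
move=> F_ge0; have [[[y [t Pt _]] [M ubM]]|no_sup] := pselect (has_sup [set F t | t in P]).
  apply: le_trans (F_ge0 t Pt) (le_sup_image (M := M) _ Pt) => t' Pt'.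
  by apply: ubM; exists t'.
by rewrite sup_out.
Qed.

End RealFacts.

Section LinearMaps.
Variables (R : realType) (U W : lmodType R[i]) (F : U -> W).
Hypothesis F_lin : clinear F.

Lemma clinear0 : F 0 = 0.
Proof.
have := F_lin 1 0 0; rewrite !scale1r addr0 => F0.
by apply/esym/(addrI (F 0)); rewrite addr0 {1}F0.
Qed.

Lemma clinearZ c u : F (c *: u) = c *: F u.
Proof. by have := F_lin c u 0; rewrite addr0 clinear0 addr0. Qed.

Lemma clinearD u v : F (u + v) = F u + F v.
Proof. by have := F_lin 1 u v; rewrite !scale1r. Qed.

Lemma clinearB u v : F (u - v) = F u - F v.
Proof. by rewrite clinearD -scaleN1r clinearZ scaleN1r. Qed.

End LinearMaps.

Section AntilinearForms.
Variables (R : realType) (U : lmodType R[i]) (f : U -> R[i]).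
Hypothesis f_anti : cantilinear f.

Lemma cantilinear0 : f 0 = 0.
Proof.
have := f_anti 1 0 0; rewrite /cconj scale1r addr0 rmorph1 mul1r => f0.
by apply/esym/(addrI (f 0)); rewrite addr0 {1}f0.
Qed.

Lemma cantilinearZ c u : f (c *: u) = conjc c * f u.
Proof. by have := f_anti c u 0; rewrite addr0 cantilinear0 addr0. Qed.

Lemma cantilinearD u v : f (u + v) = f u + f v.
Proof. by have := f_anti 1 u v; rewrite /cconj scale1r rmorph1 mul1r. Qed.

Lemma cantilinearN u : f (- u) = - f u.
Proof. by rewrite -scaleN1r cantilinearZ rmorphN1 mulN1r. Qed.

Lemma cantilinearB u v : f (u - v) = f u - f v.
Proof. by rewrite cantilinearD cantilinearN. Qed.

End AntilinearForms.

Section InnerProductSpace.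
Variables (R : realType) (V : lmodType R[i]) (ip : V -> V -> R[i]).
Hypothesis ip_inner : inner_product ip.
Local Notation N := (ipnorm ip).
Implicit Types (u v w : V) (c : R[i]).

Lemma ip_linl w : clinear (fun u => ip u w).
Proof. by case: ip_inner. Qed.

Lemma ip_conj u v : ip u v = conjc (ip v u).
Proof. by case: ip_inner. Qed.

Lemma ip_antir w : cantilinear (ip w).
Proof.
move=> c u v; rewrite /cconj [ip w (_ + _)]ip_conj [ip w u]ip_conj [ip w v]ip_conj.
by rewrite (clinearD (ip_linl w)) (clinearZ (ip_linl w)) scalecE rmorphD rmorphM.
Qed.

Lemma ip_self_eq0 v : ip v v = 0 -> v = 0.
Proof. by case: ip_inner => _ _ _; apply. Qed.

Lemma ip_self v : ip v v = (N v ^+ 2)%:C%C.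
Proof.
rewrite /ipnorm; case: ip_inner => _ _ /(_ v) [Im0 Re_ge0] _.
by rewrite sqr_sqrtr //; move: Im0; case: (ip v v) => a b /= ->.
Qed.

Lemma ipnorm_sqr v : N v ^+ 2 = Re (ip v v).
Proof. by rewrite ip_self. Qed.

Lemma ipnorm_ge0 v : 0 <= N v.
Proof. exact: sqrtr_ge0. Qed.

Lemma ipnorm0 : N 0 = 0.
Proof. by rewrite /ipnorm (clinear0 (ip_linl 0)) sqrtr0. Qed.

Lemma ipnorm_eq0 v : N v = 0 -> v = 0.
Proof. by move=> Nv0; apply: ip_self_eq0; rewrite ip_self Nv0 expr0n. Qed.

Lemma ipnorm_gt0 v : v <> 0 -> 0 < N v.
Proof. by move=> v0; rewrite lt_neqAle ipnorm_ge0 andbT eq_sym; apply/eqP => /ipnorm_eq0. Qed.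

Lemma ipnormD_sqr u v : N (u + v) ^+ 2 = N u ^+ 2 + N v ^+ 2 + 2 * Re (ip u v).
Proof.
rewrite !ipnorm_sqr (clinearD (ip_linl _)) !(cantilinearD (ip_antir _)) !raddfD /=.
by rewrite [ip v u]ip_conj; case: (ip u v) => a b /=; ring.
Qed.

Lemma ipnormZ c v : N (c *: v) = cabs c * N v.
Proof.
apply/eqP; rewrite -(@eqrXn2 _ 2) ?mulr_ge0 ?cabs_ge0 ?ipnorm_ge0 // ipnorm_sqr.
rewrite (clinearZ (ip_linl _)) (cantilinearZ (ip_antir _)) scalecE mulrA mulc_conjc.
by rewrite ip_self -rmorphM exprMn.
Qed.

Lemma ipnormN v : N (- v) = N v.
Proof. by rewrite -scaleN1r ipnormZ cabsN (cabs_real 1) normr1 mul1r. Qed.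

Lemma ipnormB_sym u v : N (u - v) = N (v - u).
Proof. by rewrite -ipnormN opprB. Qed.

Lemma ipnorm_sqr_sub_proj u v (t : R) :
  N (u - (t%:C * ip u v)%C *: v) ^+ 2
  = N u ^+ 2 + (t ^+ 2 * N v ^+ 2 - 2 * t) * cabs (ip u v) ^+ 2.
Proof.
rewrite -scaleNr ipnormD_sqr ipnormZ (cantilinearZ (ip_antir _)) cabsN cabsM cabs_real.
by rewrite !exprMn real_normK ?num_real // cabs_sqr; case: (ip u v) => a b /=; ring.
Qed.

Lemma cauchy_schwarz u v : cabs (ip u v) <= N u * N v.
Proof.
have [->|/eqP v0] := eqVneq v 0.
  by rewrite (cantilinear0 (ip_antir u)) cabs0 ipnorm0 mulr0.
have Nv2_gt0 : 0 < N v ^+ 2 by rewrite exprn_gt0 // ipnorm_gt0.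
have := sqr_ge0 (N (u - ((N v ^+ 2)^-1%:C * ip u v)%C *: v)).
set t := (N v ^+ 2)^-1; rewrite ipnorm_sqr_sub_proj.
have -> : t ^+ 2 * N v ^+ 2 - 2 * t = - t.
  by rewrite /t expr2 -mulrA mulVf ?gt_eqF //; ring.
rewrite mulNr subr_ge0 mulrC ler_pdivrMr // => le_z_uv.
by rewrite -ler_sqr ?nnegrE ?cabs_ge0 ?mulr_ge0 ?ipnorm_ge0 // exprMn.
Qed.

Lemma ler_ipnormD u v : N (u + v) <= N u + N v.
Proof.
rewrite -ler_sqr ?nnegrE ?addr_ge0 ?ipnorm_ge0 // ipnormD_sqr sqrrD.
have := le_trans (Re_le_cabs (ip u v)) (cauchy_schwarz u v); lra.
Qed.

Lemma parallelogram u v :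
  N (u + v) ^+ 2 + N (u - v) ^+ 2 = 2 * N u ^+ 2 + 2 * N v ^+ 2.
Proof.
by rewrite !ipnormD_sqr ipnormN (cantilinearN (ip_antir _)) raddfN /=; ring.
Qed.

Definition ip_cvg (x : nat -> V) (l : V) :=
  forall e : R, 0 < e -> exists n0, forall n, (n0 <= n)%N -> N (x n - l) < e.

Definition ip_cauchy (x : nat -> V) := forall e : R, 0 < e -> exists n0,
  forall m n, (n0 <= m)%N -> (n0 <= n)%N -> N (x m - x n) < e.

Definition subspace (M : set V) :=
  M 0 /\ forall c u v, M u -> M v -> M (c *: u + v).

Definition seq_closed (M : set V) :=
  forall x l, (forall n, M (x n)) -> ip_cvg x l -> M l.

Lemma subspaceZ M c u : subspace M -> M u -> M (c *: u).
Proof. by case=> M0 M_lin Mu; have := M_lin c u 0 Mu M0; rewrite addr0. Qed.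

Lemma subspaceD M u v : subspace M -> M u -> M v -> M (u + v).
Proof. by case=> _ M_lin Mu Mv; have := M_lin 1 u v Mu Mv; rewrite scale1r. Qed.

Lemma ip_cvg_cauchy x l : ip_cvg x l -> ip_cauchy x.
Proof.
move=> x_l e e_gt0; have e2_gt0 : 0 < e / 2 by rewrite divr_gt0.
have [n0 x_near] := x_l _ e2_gt0; exists n0 => m n le_m le_n.
have -> : x m - x n = (x m - l) - (x n - l) by rewrite opprB addrA subrK.
apply: le_lt_trans (ler_ipnormD _ _) _; rewrite ipnormN.
by have := x_near m le_m; have := x_near n le_n; lra.
Qed.

Section NearestPoint.
Variables (x : V) (M : set V) (d : R).
Hypotheses (M_sub : subspace M) (d_ge0 : 0 <= d) (d_lb : forall m, M m -> d <= N (x - m)).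

Lemma nearly_nearest_close a b (e1 e2 : R) : M a -> M b -> 0 < e1 <= 1 -> 0 < e2 <= 1 ->
  N (x - a) <= d + e1 -> N (x - b) <= d + e2 ->
  N (a - b) ^+ 2 <= 2 * (2 * d + 1) * (e1 + e2).
Proof.
move=> Ma Mb /andP[e1_gt0 e1_le1] /andP[e2_gt0 e2_le1] near_a near_b.
set mid := (2^-1 : R[i]) *: a + (2^-1 : R[i]) *: b.
have Mmid : M mid by apply: subspaceD => //; apply: subspaceZ.
have two_mid : x - b + (x - a) = (2 : R[i]) *: (x - mid).
  rewrite scalerBr scalerDr !scalerA mulfV ?scale1r; last by rewrite pnatr_eq0.
  by rewrite scaler_nat mulr2n opprD addrACA; congr (_ + _); rewrite addrC.
have cabs2 : cabs (2 : R[i]) = 2.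
  by rewrite /cabs /= addr0 expr0n /= addr0 sqrtr_sqr ger0_norm ?addr_ge0 ?ler01.
have := parallelogram (x - b) (x - a).
have -> : x - b - (x - a) = a - b by rewrite opprB addrC addrA subrK.
rewrite two_mid ipnormZ cabs2 exprMn.
have := ler_sqr_nneg d_ge0 (d_lb Mmid).
have := ler_sqr_nneg (ipnorm_ge0 _) near_a; have := ler_sqr_nneg (ipnorm_ge0 _) near_b.
have : e1 ^+ 2 <= e1 by rewrite expr2 ler_piMl // ltW.
have : e2 ^+ 2 <= e2 by rewrite expr2 ler_piMl // ltW.
rewrite !sqrrD; lra.
Qed.

Lemma minimizing_cauchy ms : (forall n, M (ms n)) ->
  (forall n, N (x - ms n) < d + n.+1%:R^-1) -> ip_cauchy ms.
Proof.
move=> Mms near_ms e e_gt0.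
have c_gt0 : 0 < 4 * (2 * d + 1) by move: d_ge0; lra.
have [k k_small] := exists_invS_lt (divr_gt0 (exprn_gt0 2 e_gt0) c_gt0).
exists k => m n le_km le_kn; rewrite -(@ltr_pXn2r _ 2) ?nnegrE ?ipnorm_ge0 ?(ltW e_gt0) //.
have close := nearly_nearest_close (Mms m) (Mms n) _ _ (ltW (near_ms m)) (ltW (near_ms n)).
apply: le_lt_trans (close _ _) _; rewrite ?invS_gt0 ?invS_le1 //.
rewrite ltr_pdivlMr // in k_small; apply: le_lt_trans k_small.
have -> : k.+1%:R^-1 * (4 * (2 * d + 1)) = 2 * (2 * d + 1) * (k.+1%:R^-1 + k.+1%:R^-1).
  by ring.
by apply: ler_wpM2l; [move: d_ge0; lra | apply: lerD; exact: lef_invS].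
Qed.

Lemma minimizing_limit ms p :
  (forall n, N (x - ms n) < d + n.+1%:R^-1) -> ip_cvg ms p -> N (x - p) <= d.
Proof.
move=> near_ms ms_p; apply/ler_addgt0Pr => e e_gt0.
have e2_gt0 : 0 < e / 2 by rewrite divr_gt0.
have [n0 near_p] := ms_p _ e2_gt0; have [k k_small] := exists_invS_lt e2_gt0.
set n := maxn n0 k.
have near_x : N (x - ms n) < d + e / 2.
  apply: lt_le_trans (near_ms n) _; rewrite lerD2l.
  exact: le_trans (lef_invS (leq_maxr n0 k)) (ltW k_small).
have -> : x - p = (x - ms n) + (ms n - p) by rewrite addrA subrK.
apply: le_trans (ler_ipnormD _ _) _.
by rewrite [e in d + e]splitr addrA ltW // ltrD // near_p ?leq_maxl.
Qed.

End NearestPoint.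

Lemma exists_nearest M x : ip_complete ip -> subspace M -> seq_closed M ->
  exists2 p, M p & forall m, M m -> N (x - p) <= N (x - m).
Proof.
move=> ip_compl M_sub M_closed.
set E := [set N (x - m) | m in M].
have M0 : M 0 by case: M_sub.
have E_lb : has_lbound E by exists 0 => _ [m _ <-]; exact: ipnorm_ge0.
have E_inf : has_inf E by split => //; exists (N (x - 0)), 0.
set d := inf E.
have d_lb m : M m -> d <= N (x - m) by move=> Mm; apply: ge_inf E_lb _ _; exists m.
have d_ge0 : 0 <= d.
  by apply: lb_le_inf => [|_ [m _ <-]]; [exists (N (x - 0)), 0 | exact: ipnorm_ge0].
have /choice [ms near_ms] : forall n : nat, exists m, M m /\ N (x - m) < d + n.+1%:R^-1.
  by move=> n; have [_ [m Mm <-] ?] := inf_adherent (invS_gt0 n) E_inf; exists m.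
have [p ms_p] := ip_compl ms
  (minimizing_cauchy M_sub d_ge0 d_lb (fun n => (near_ms n).1) (fun n => (near_ms n).2)).
exists p; first by apply: (M_closed ms) => // n; case: (near_ms n).
move=> m Mm; apply: le_trans (d_lb m Mm).
exact: (minimizing_limit (fun n => (near_ms n).2) ms_p).
Qed.

Lemma nearest_orthogonal M x p : subspace M -> M p ->
  (forall m, M m -> N (x - p) <= N (x - m)) -> forall m, M m -> ip (x - p) m = 0.
Proof.
move=> M_sub Mp p_nearest m Mm.
(* Unless [(x - p, m) = 0], moving p by [t (x - p, m) m] for a small t > 0 gets closer to x. *)
set y := x - p; set t := (N m ^+ 2 + 1)^-1.
have t_gt0 : 0 < t by rewrite invr_gt0; have := sqr_ge0 (N m); lra.
have tm_lt1 : t * N m ^+ 2 < 1.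
  by rewrite /t mulrC ltr_pdivrMr // ?mul1r ?ltrDl //; have := sqr_ge0 (N m); lra.
have := p_nearest _ (subspaceD M_sub Mp (subspaceZ (t%:C * ip y m)%C M_sub Mm)).
rewrite opprD addrA => /(ler_sqr_nneg (ipnorm_ge0 _)).
rewrite ipnorm_sqr_sub_proj lerDl => coef_ge0.
have coef_lt0 : t ^+ 2 * N m ^+ 2 - 2 * t < 0.
  have -> : t ^+ 2 * N m ^+ 2 - 2 * t = t * (t * N m ^+ 2 - 2) by ring.
  by rewrite pmulr_rlt0 //; lra.
have : cabs (ip y m) ^+ 2 <= 0 by rewrite -(ler_nM2l coef_lt0) mulr0.
by move=> sqr_le0; apply/cabs_eq0/eqP; rewrite -sqrf_eq0 eq_le sqr_le0 sqr_ge0.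
Qed.

Lemma orthogonal_complement_neq0 M x : ip_complete ip -> subspace M -> seq_closed M ->
  ~ M x -> exists2 y, y <> 0 & forall m, M m -> ip y m = 0.
Proof.
move=> ip_compl M_sub M_closed Mx.
have [p Mp p_nearest] := exists_nearest x ip_compl M_sub M_closed.
exists (x - p); last exact: nearest_orthogonal.
by move/eqP; rewrite subr_eq0 => /eqP x_p; apply: Mx; rewrite x_p.
Qed.

Lemma bounded_kernel_closed f K : cantilinear f ->
  (forall v, cabs (f v) <= K * N v) -> seq_closed [set v | f v = 0].
Proof.
move=> f_anti f_bnd xs l xs0 xs_l; apply/cabs_eq0/eqP; rewrite eq_le cabs_ge0 andbT.
apply/ler_addgt0Pr => e e_gt0; rewrite add0r.
have K1_gt0 : 0 < `|K| + 1 by have := normr_ge0 K; lra.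
have [n0 near_l] := xs_l _ (divr_gt0 e_gt0 K1_gt0).
have := near_l n0 (leqnn n0); rewrite ltr_pdivlMr // => small.
have -> : f l = f (l - xs n0) by rewrite (cantilinearB f_anti) (xs0 n0 : f _ = 0) subr0.
apply: le_trans (f_bnd _) _; rewrite ipnormB_sym.
have := ler_norm K; have := ipnorm_ge0 (xs n0 - l); have := normr_ge0 K; nra.
Qed.

Theorem riesz_representation f : ip_complete ip -> cantilinear f ->
  (exists K, forall v, cabs (f v) <= K * N v) -> exists q, forall v, f v = ip q v.
Proof.
move=> ip_compl f_anti [K f_bnd].
set M := [set v | f v = 0].
have M_sub : subspace M.
  split => [|c u v Mu Mv]; first exact: cantilinear0.
  by rewrite /M /= f_anti Mu Mv mulr0 addr0.
have [M_full|/existsNP [x Mx]] := pselect (forall v, M v).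
  by exists 0 => v; rewrite (clinear0 (ip_linl v)); exact: M_full.
have [y y0 y_orth] :=
  orthogonal_complement_neq0 ip_compl M_sub (bounded_kernel_closed f_anti f_bnd) Mx.
have yy0 : ip y y != 0 by apply/eqP => /ip_self_eq0.
exists ((f y / ip y y) *: y) => v; rewrite (clinearZ (ip_linl v)) scalecE.
have : M (conjc (f v) *: y - conjc (f y) *: v).
  by rewrite /M /= (cantilinearB f_anti) !(cantilinearZ f_anti) !conjcK mulrC subrr.
move/y_orth; rewrite (cantilinearB (ip_antir y)) !(cantilinearZ (ip_antir y)) !conjcK.
move/eqP; rewrite subr_eq0 => /eqP fv_yy.
by apply: (mulIf yy0); rewrite fv_yy; field.
Qed.

Section LaxMilgram.
Hypothesis ip_compl : ip_complete ip.
Variables (t : V -> V -> R[i]) (c0 Ct : R).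
Hypotheses (t_linl : forall w, clinear (fun u => t u w))
  (t_antir : forall u, cantilinear (t u))
  (Ct_ge0 : 0 <= Ct) (t_bounded : forall u v, cabs (t u v) <= Ct * N u * N v)
  (c0_gt0 : 0 < c0) (t_coercive : forall v, c0 * N v ^+ 2 <= cabs (t v v)).

Definition represents u q := forall v, t u v = ip q v.

Lemma representsB u1 u2 q1 q2 :
  represents u1 q1 -> represents u2 q2 -> represents (u1 - u2) (q1 - q2).
Proof.
by move=> rep1 rep2 v; rewrite (clinearB (t_linl v)) (clinearB (ip_linl v)) rep1 rep2.
Qed.

Lemma represents_exists u : exists q, represents u q.
Proof.
have [q t_q] := riesz_representation ip_compl (t_antir u) (ex_intro _ _ (t_bounded u)).
by exists q.
Qed.

Lemma coercive_represents_le u q : represents u q -> c0 * N u <= N q.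
Proof.
move=> rep_u; have := t_coercive u; rewrite rep_u => /le_trans/(_ (cauchy_schwarz q u)).
have [->|/eqP u0] := eqVneq u 0; first by rewrite ipnorm0 !mulr0 => _; exact: ipnorm_ge0.
by rewrite expr2 mulrA ler_pM2r // ipnorm_gt0.
Qed.

Lemma represents_limit us xs u l : (forall n, represents (us n) (xs n)) ->
  ip_cvg us u -> ip_cvg xs l -> represents u l.
Proof.
move=> us_xs us_u xs_l v; apply/eqP; rewrite -subr_eq0; apply/eqP/cabs_eq0/eqP.
rewrite eq_le cabs_ge0 andbT; apply/ler_addgt0Pr => e e_gt0; rewrite add0r.
set K := Ct * N v + N v + 1.
have K_gt0 : 0 < K.
  by rewrite /K; have := mulr_ge0 Ct_ge0 (ipnorm_ge0 v); have := ipnorm_ge0 v; lra.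
have eK_gt0 : 0 < e / (2 * K) by rewrite divr_gt0 ?mulr_gt0.
have [n1 near_u] := us_u _ eK_gt0; have [n2 near_l] := xs_l _ eK_gt0.
set n := maxn n1 n2.
have -> : t u v - ip l v = t (u - us n) v + ip (xs n - l) v.
  by rewrite (clinearB (t_linl v)) (clinearB (ip_linl v)) us_xs addrA subrK.
apply: le_trans (ler_cabsD _ _) _.
have bound_u : cabs (t (u - us n) v) <= K * N (us n - u).
  apply: le_trans (t_bounded _ _) _; rewrite ipnormB_sym mulrAC.
  by apply: ler_wpM2r; rewrite ?ipnorm_ge0 // /K; have := ipnorm_ge0 v; lra.
have bound_l : cabs (ip (xs n - l) v) <= K * N (xs n - l).
  apply: le_trans (cauchy_schwarz _ _) _; rewrite mulrC.
  by apply: ler_wpM2r; rewrite ?ipnorm_ge0 // /K; have := mulr_ge0 Ct_ge0 (ipnorm_ge0 v); lra.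
have := near_u n (leq_maxl _ _); have := near_l n (leq_maxr _ _).
rewrite !ltr_pdivlMr ?mulr_gt0 //; lra.
Qed.

Lemma represented_closed : seq_closed [set q | exists u, represents u q].
Proof.
move=> xs l /choice [us us_xs] xs_l.
have us_cauchy : ip_cauchy us.
  move=> e e_gt0; have [n0 xs_near] := ip_cvg_cauchy xs_l (mulr_gt0 c0_gt0 e_gt0).
  exists n0 => m n le_m le_n; rewrite -(ltr_pM2l c0_gt0).
  apply: le_lt_trans (xs_near m n le_m le_n).
  exact/coercive_represents_le/representsB.
have [u us_u] := ip_compl us_cauchy.
by exists u; apply: represents_limit us_xs us_u xs_l.
Qed.

Lemma represented_subspace : subspace [set q | exists u, represents u q].
Proof.
split; first by exists 0 => v; rewrite (clinear0 (t_linl v)) (clinear0 (ip_linl v)).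
move=> c q1 q2 [u1 rep1] [u2 rep2]; exists (c *: u1 + u2) => v.
rewrite (clinearD (t_linl v)) (clinearZ (t_linl v)) rep1 rep2.
by rewrite (clinearD (ip_linl v)) (clinearZ (ip_linl v)).
Qed.

Lemma represented_all q : exists u, represents u q.
Proof.
apply: contrapT => no_u.
have [y y0 y_orth] :=
  orthogonal_complement_neq0 ip_compl represented_subspace represented_closed no_u.
have [qy rep_y] := represents_exists y.
have tyy0 : t y y = 0 by rewrite rep_y ip_conj y_orth ?conjc0 //; exists y.
apply: y0; apply: ipnorm_eq0; apply/eqP; rewrite -sqrf_eq0 eq_le sqr_ge0 andbT.
by rewrite -(pmulr_rle0 _ c0_gt0) (le_trans (t_coercive y)) // tyy0 cabs0.
Qed.

Theorem lax_milgram f : cantilinear f -> (exists K, forall v, cabs (f v) <= K * N v) ->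
  exists w, forall v, t w v = f v.
Proof.
move=> f_anti f_bnd; have [q f_q] := riesz_representation ip_compl f_anti f_bnd.
by have [w rep_w] := represented_all q; exists w => v; rewrite rep_w f_q.
Qed.

End LaxMilgram.

End InnerProductSpace.

Section GardingResolvent.
Variable R : realType.
Local Notation C := R[i].
Variables (V V0 : lmodType C) (ipH : V -> V -> C) (ip0 : V0 -> V0 -> C).
Hypotheses (ipH_inner : inner_product ipH) (ipH_compl : ip_complete ipH)
  (ip0_inner : inner_product ip0).
Local Notation NH := (ipnorm ipH).
Local Notation N0 := (ipnorm ip0).
Variables (J D : V -> V0).
Hypotheses (J_lin : clinear J) (J_le : forall v, N0 (J v) <= NH v)
  (D_lin : clinear D) (D_le : forall v, N0 (D v) <= NH v).
Variables (b : V -> V -> C) (Cb : R).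
Hypotheses (b_linl : forall w, clinear (fun u => b u w))
  (b_antir : forall u, cantilinear (b u))
  (b_bounded : forall u v, cabs (b u v) <= Cb * NH u * NH v).
Variables (mu eps : V0 -> V0) (Mmu Meps : R).
Hypotheses (mu_lin : clinear mu) (mu_bounded : forall x, N0 (mu x) <= Mmu * N0 x)
  (eps_lin : clinear eps) (eps_bounded : forall x, N0 (eps x) <= Meps * N0 x).
Local Notation a := (aform ip0 J D b mu eps).
Variables (c1 c2 : R).
Hypotheses (c1_gt0 : 0 < c1) (c2_gt0 : 0 < c2)
  (garding : forall v, c1 * NH v ^+ 2 <= cabs (a v v + (c2 * N0 (J v) ^+ 2)%:C%C)).
Variable Ainv : (V -> C) -> V.
Hypotheses (A_Ainv : forall f, in_dual ipH f -> (fun v => a (Ainv f) v) = f)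
  (Ainv_A : forall u, Ainv (fun v => a u v) = u).
Variable MA : R.
Hypothesis Ainv_bounded : forall f, in_dual ipH f -> NH (Ainv f) <= MA * dual_norm ipH f.

Lemma aform_linl w : clinear (fun u => a u w).
Proof.
move=> c u u'; rewrite /aform (clinearD D_lin) (clinearZ D_lin) (clinearD mu_lin).
rewrite (clinearZ mu_lin) (clinearD (ip_linl ip0_inner _)) (clinearZ (ip_linl ip0_inner _)).
rewrite (clinearD J_lin) (clinearZ J_lin) (clinearD eps_lin) (clinearZ eps_lin).
rewrite (clinearD (ip_linl ip0_inner _)) (clinearZ (ip_linl ip0_inner _)).
by rewrite (clinearD (b_linl w)) (clinearZ (b_linl w)) !scalecE; ring.
Qed.

Lemma aform_antir u : cantilinear (a u).
Proof.
move=> c v v'; rewrite /aform /cconj (clinearD D_lin) (clinearZ D_lin) (clinearD J_lin).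
rewrite (clinearZ J_lin) !(cantilinearD (ip_antir ip0_inner _)).
by rewrite !(cantilinearZ (ip_antir ip0_inner _)) b_antir; ring.
Qed.

Lemma cabs_ip0_op_le (F : V0 -> V0) (MF : R) (G : V -> V0) u v :
  (forall x, N0 (F x) <= MF * N0 x) -> (forall v, N0 (G v) <= NH v) ->
  cabs (ip0 (F (G u)) (G v)) <= `|MF| * NH u * NH v.
Proof.
move=> F_le G_le; apply: le_trans (cauchy_schwarz ip0_inner _ _) _.
apply: ler_pM; rewrite ?ipnorm_ge0 //; apply: le_trans (F_le _) _.
apply: le_trans (ler_wpM2r (ipnorm_ge0 _ _) (ler_norm MF)) _.
by rewrite ler_wpM2l ?normr_ge0.
Qed.

Definition Ca := `|Mmu| + `|Cb| + `|Meps|.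

Lemma aform_bounded u v : cabs (a u v) <= Ca * NH u * NH v.
Proof.
rewrite /aform; apply: le_trans (ler_cabsD _ _) _; rewrite cabsN.
apply: le_trans (lerD (ler_cabsD _ _) (lexx _)) _.
have mu_le := cabs_ip0_op_le u v mu_bounded D_le.
have eps_le := cabs_ip0_op_le u v eps_bounded J_le.
have b_le : cabs (b u v) <= `|Cb| * NH u * NH v.
  apply: le_trans (b_bounded u v) _; rewrite -!mulrA; apply: ler_wpM2r (ler_norm _).
  by rewrite mulr_ge0 ?ipnorm_ge0.
by rewrite /Ca !mulrDl; lra.
Qed.

(* The form of [A + C_G2 J^* J], coercive on H by Gårding's inequality. *)
Definition ashift u v := a u v + c2%:C%C * ip0 (J u) (J v).

Lemma ashift_linl w : clinear (fun u => ashift u w).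
Proof.
move=> c u u'; rewrite /ashift (aform_linl w) (clinearD J_lin) (clinearZ J_lin).
by rewrite (clinearD (ip_linl ip0_inner _)) (clinearZ (ip_linl ip0_inner _)) !scalecE; ring.
Qed.

Lemma ashift_antir u : cantilinear (ashift u).
Proof.
move=> c v v'; rewrite /ashift (aform_antir u) /cconj (clinearD J_lin) (clinearZ J_lin).
by rewrite (cantilinearD (ip_antir ip0_inner _)) (cantilinearZ (ip_antir ip0_inner _)); ring.
Qed.

Lemma ashift_bounded u v : cabs (ashift u v) <= (Ca + c2) * NH u * NH v.
Proof.
rewrite /ashift; apply: le_trans (ler_cabsD _ _) _.
rewrite cabsM cabs_real (ger0_norm (ltW c2_gt0)).
have -> : (Ca + c2) * NH u * NH v = Ca * NH u * NH v + c2 * (NH u * NH v) by ring.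
rewrite lerD ?aform_bounded // ler_wpM2l ?(ltW c2_gt0) //.
apply: le_trans (cauchy_schwarz ip0_inner _ _) _.
exact: ler_pM (ipnorm_ge0 _ _) (ipnorm_ge0 _ _) (J_le u) (J_le v).
Qed.

Lemma ashift_coercive v : c1 * NH v ^+ 2 <= cabs (ashift v v).
Proof. by rewrite /ashift (ip_self ip0_inner) -rmorphM; exact: garding. Qed.

Lemma ashift_surjective f : in_dual ipH f -> exists w, forall v, ashift w v = f v.
Proof.
case=> f_anti f_bnd.
have Ca_c2_ge0 : 0 <= Ca + c2 by rewrite addr_ge0 ?(ltW c2_gt0) // /Ca !addr_ge0.
exact: (lax_milgram ipH_inner ipH_compl ashift_linl ashift_antir Ca_c2_ge0
  ashift_bounded c1_gt0 ashift_coercive f_anti f_bnd).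
Qed.

Lemma Ainv_zero : Ainv (fun _ => 0) = 0.
Proof.
rewrite -[RHS]Ainv_A; congr Ainv; apply: funext => v.
exact/esym/(clinear0 (aform_linl v)).
Qed.

Lemma Ainv_solves f : in_dual ipH f -> forall v, a (Ainv f) v = f v.
Proof. by move=> f_dual v; rewrite -[in RHS](A_Ainv f_dual). Qed.

Lemma embed0_in_dual g : in_dual ipH (embed0 ip0 J g).
Proof.
split=> [c v v'|].
  by rewrite /embed0 (clinearD J_lin) (clinearZ J_lin) (ip_antir ip0_inner).
exists (N0 g) => v; apply: le_trans (cauchy_schwarz ip0_inner _ _) _.
by rewrite ler_wpM2l ?ipnorm_ge0.
Qed.

Lemma embed0_zero : embed0 ip0 J 0 = (fun _ => 0).
Proof. by apply: funext => v; rewrite /embed0 (clinear0 (ip_linl ip0_inner _)). Qed.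

Lemma dual_norm_ge0 f : 0 <= dual_norm ipH f.
Proof. by apply: sup_image_ge0 => v _; rewrite divr_ge0 ?cabs_ge0 ?ipnorm_ge0. Qed.

Lemma le_dual_norm f v : in_dual ipH f -> v <> 0 -> cabs (f v) / NH v <= dual_norm ipH f.
Proof.
move=> [_ [K f_le]] v0; rewrite /dual_norm.
apply: (le_sup_image (P := [set v | v <> 0]) (F := fun v => cabs (f v) / NH v)
  (M := `|K|)) => // w w0.
rewrite ler_pdivrMr ?(ipnorm_gt0 ipH_inner) //; apply: le_trans (f_le w) _.
by rewrite ler_wpM2r ?ipnorm_ge0 ?ler_norm.
Qed.

Lemma cabs_le_dual_norm f v : in_dual ipH f -> cabs (f v) <= dual_norm ipH f * NH v.
Proof.
move=> f_dual; have [->|/eqP v0] := eqVneq v 0.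
  by rewrite (cantilinear0 f_dual.1) cabs0 mulr_ge0 ?dual_norm_ge0 ?ipnorm_ge0.
by rewrite -ler_pdivrMr ?(ipnorm_gt0 ipH_inner) //; apply: le_dual_norm.
Qed.

Lemma dual_norm_embed0_le g : dual_norm ipH (embed0 ip0 J g) <= N0 g.
Proof.
apply: sup_image_le (ipnorm_ge0 _ _) _ => v v0.
rewrite ler_pdivrMr ?(ipnorm_gt0 ipH_inner) //.
apply: le_trans (cauchy_schwarz ip0_inner _ _) _.
by rewrite ler_wpM2l ?ipnorm_ge0.
Qed.

Lemma dual_norm_gt0 f : in_dual ipH f -> f <> (fun _ => 0) -> 0 < dual_norm ipH f.
Proof.
move=> f_dual f0; have [v fv0] : exists v, f v <> 0.
  by apply: contrapT => /forallNP f_eq0; apply: f0; apply: funext => v; apply: contrapT.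
have v0 : v <> 0 by move=> v0; apply: fv0; rewrite v0 (cantilinear0 f_dual.1).
apply: lt_le_trans (le_dual_norm f_dual v0).
rewrite divr_gt0 ?(ipnorm_gt0 ipH_inner) // lt_neqAle cabs_ge0 andbT eq_sym.
by apply/eqP => /cabs_eq0.
Qed.

Lemma Ainv_le f : in_dual ipH f -> NH (Ainv f) <= `|MA| * dual_norm ipH f.
Proof.
move=> f_dual; apply: le_trans (Ainv_bounded f_dual) _.
by rewrite ler_wpM2r ?dual_norm_ge0 ?ler_norm.
Qed.

Local Notation ndH := (opnorm_dual_H ipH Ainv).
Local Notation n0H := (opnorm_0_H ipH ip0 J Ainv).
Local Notation n00 := (opnorm_0_0 ip0 J Ainv).

Lemma opnorm_dual_H_ge0 : 0 <= ndH.
Proof. by apply: sup_image_ge0 => f _; rewrite divr_ge0 ?ipnorm_ge0 ?dual_norm_ge0. Qed.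

Lemma opnorm_0_H_ge0 : 0 <= n0H.
Proof. by apply: sup_image_ge0 => g _; rewrite divr_ge0 ?ipnorm_ge0. Qed.

Lemma opnorm_0_0_ge0 : 0 <= n00.
Proof. by apply: sup_image_ge0 => g _; rewrite divr_ge0 ?ipnorm_ge0. Qed.

Lemma le_opnorm_dual_H f : in_dual ipH f -> f <> (fun _ => 0) ->
  NH (Ainv f) / dual_norm ipH f <= ndH.
Proof.
move=> f_dual f0; rewrite /opnorm_dual_H.
apply: (le_sup_image (P := [set f | in_dual ipH f /\ f <> (fun _ => 0)])
  (F := fun f => NH (Ainv f) / dual_norm ipH f) (M := `|MA|)) => // h [h_dual h0].
by rewrite ler_pdivrMr ?dual_norm_gt0 // Ainv_le.
Qed.

Lemma Ainv_embed0_le g : g <> 0 -> NH (Ainv (embed0 ip0 J g)) <= `|MA| * N0 g.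
Proof.
move=> g0; apply: le_trans (Ainv_le (embed0_in_dual g)) _.
by rewrite ler_wpM2l ?normr_ge0 ?dual_norm_embed0_le.
Qed.

Lemma le_opnorm_0_H g : g <> 0 -> NH (Ainv (embed0 ip0 J g)) / N0 g <= n0H.
Proof.
move=> g0; rewrite /opnorm_0_H.
apply: (le_sup_image (P := [set g | g <> 0])
  (F := fun g => NH (Ainv (embed0 ip0 J g)) / N0 g) (M := `|MA|)) => // h h0.
by rewrite ler_pdivrMr ?(ipnorm_gt0 ip0_inner) // Ainv_embed0_le.
Qed.

Lemma le_opnorm_0_0 g : g <> 0 -> N0 (J (Ainv (embed0 ip0 J g))) / N0 g <= n00.
Proof.
move=> g0; rewrite /opnorm_0_0.
apply: (le_sup_image (P := [set g | g <> 0])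
  (F := fun g => N0 (J (Ainv (embed0 ip0 J g))) / N0 g) (M := `|MA|)) => // h h0.
rewrite ler_pdivrMr ?(ipnorm_gt0 ip0_inner) //.
exact: le_trans (J_le _) (Ainv_embed0_le h0).
Qed.

Lemma opnorm_0_H_le_dual_H : n0H <= ndH.
Proof.
apply: sup_image_le opnorm_dual_H_ge0 _ => g g0.
have [f0|f0] := pselect (embed0 ip0 J g = fun _ => 0).
  by rewrite f0 Ainv_zero (ipnorm0 ipH_inner) mul0r opnorm_dual_H_ge0.
apply: le_trans (le_opnorm_dual_H (embed0_in_dual g) f0).
rewrite ler_wpM2l ?ipnorm_ge0 // lef_pV2 ?posrE ?(ipnorm_gt0 ip0_inner) ?dual_norm_gt0 //.
  exact: dual_norm_embed0_le.
exact: embed0_in_dual.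
Qed.

Lemma ashift_solution_le f w : in_dual ipH f -> (forall v, ashift w v = f v) ->
  c1 * NH w <= dual_norm ipH f.
Proof.
move=> f_dual w_f; have := ashift_coercive w.
rewrite w_f => /le_trans/(_ (cabs_le_dual_norm w f_dual)).
have [->|/eqP w0] := eqVneq w 0.
  by rewrite (ipnorm0 ipH_inner) !mulr0 => _; exact: dual_norm_ge0.
by rewrite expr2 mulrA ler_pM2r // (ipnorm_gt0 ipH_inner).
Qed.

Lemma Ainv_decompose f w : in_dual ipH f -> (forall v, ashift w v = f v) ->
  Ainv f = w + c2%:C%C *: Ainv (embed0 ip0 J (J w)).
Proof.
move=> f_dual w_f; rewrite -[RHS]Ainv_A; congr Ainv; apply: funext => v.
rewrite (clinearD (aform_linl v)) (clinearZ (aform_linl v)).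
by rewrite (Ainv_solves (embed0_in_dual (J w))) -w_f.
Qed.

Lemma opnorm_dual_H_le : ndH <= c1^-1 * (1 + c2 * n0H).
Proof.
have bound_ge0 : 0 <= c1^-1 * (1 + c2 * n0H).
  rewrite mulr_ge0 ?invr_ge0 ?(ltW c1_gt0) // addr_ge0 //.
  by rewrite mulr_ge0 ?(ltW c2_gt0) ?opnorm_0_H_ge0.
apply: sup_image_le bound_ge0 _ => f [f_dual f0].
have [w w_f] := ashift_surjective f_dual.
have w_le : NH w <= c1^-1 * dual_norm ipH f.
  by rewrite ler_pdivlMl // ashift_solution_le.
set k := Ainv (embed0 ip0 J (J w)).
have k_le : NH k <= n0H * NH w.
  have [Jw0|/eqP Jw0] := eqVneq (J w) 0.
    rewrite /k Jw0 embed0_zero Ainv_zero (ipnorm0 ipH_inner).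
    by rewrite mulr_ge0 ?opnorm_0_H_ge0 ?ipnorm_ge0.
  have := le_opnorm_0_H Jw0; rewrite ler_pdivrMr ?(ipnorm_gt0 ip0_inner) // => k_le.
  by apply: le_trans k_le _; rewrite ler_wpM2l ?opnorm_0_H_ge0.
rewrite ler_pdivrMr ?dual_norm_gt0 // (Ainv_decompose f_dual w_f).
apply: le_trans (ler_ipnormD ipH_inner _ _) _.
rewrite (ipnormZ ipH_inner) cabs_real (ger0_norm (ltW c2_gt0)).
have -> : c1^-1 * (1 + c2 * n0H) * dual_norm ipH f
  = c1^-1 * dual_norm ipH f + c2 * (n0H * (c1^-1 * dual_norm ipH f)) by ring.
rewrite lerD // ler_wpM2l ?(ltW c2_gt0) //.
by apply: le_trans k_le _; rewrite ler_wpM2l ?opnorm_0_H_ge0.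
Qed.

Lemma opnorm_0_0_le_0_H : n00 <= n0H.
Proof.
apply: sup_image_le opnorm_0_H_ge0 _ => g g0; apply: le_trans (le_opnorm_0_H g0).
by rewrite ler_wpM2r ?invr_ge0 ?ipnorm_ge0 ?J_le.
Qed.

Lemma garding_Ainv_embed0 g (u := Ainv (embed0 ip0 J g)) :
  c1 * NH u ^+ 2 <= N0 g * N0 (J u) + c2 * N0 (J u) ^+ 2.
Proof.
apply: le_trans (garding u) _; rewrite (Ainv_solves (embed0_in_dual g)).
apply: le_trans (ler_cabsD _ _) _.
rewrite cabs_real ger0_norm ?lerD2r; first exact: cauchy_schwarz ip0_inner g (J u).
exact: mulr_ge0 (ltW c2_gt0) (sqr_ge0 _).
Qed.

Lemma opnorm_0_H_le : n0H <= (Num.sqrt c1)^-1 * n00 * Num.sqrt (c2 + n00^-1).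
Proof.
set B := _ * _ * _.
have B_ge0 : 0 <= B by rewrite /B !mulr_ge0 ?invr_ge0 ?sqrtr_ge0 ?opnorm_0_0_ge0.
have B_sqr : B ^+ 2 = c1^-1 * (n00 + c2 * n00 ^+ 2).
  rewrite /B !exprMn exprVn (sqr_sqrtr (ltW c1_gt0)) sqr_sqrtr; last first.
    by rewrite addr_ge0 ?(ltW c2_gt0) ?invr_ge0 ?opnorm_0_0_ge0.
  (* For [n00 = 0], [n00^-1 = 0] and the bound is 0; it still holds, since then
     [J u = 0] for u := A^{-1} g, and Gårding forces [u = 0]. *)
  have [->|n00_neq0] := eqVneq n00 0; first by rewrite invr0 expr0n /=; ring.
  by field; rewrite n00_neq0 gt_eqF.
apply: (sup_image_le B_ge0) => g g0.
set u := Ainv (embed0 ip0 J g).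
have g_gt0 := ipnorm_gt0 ip0_inner g0.
have Ju_le : N0 (J u) <= n00 * N0 g by rewrite -ler_pdivrMr // le_opnorm_0_0.
suff : (NH u / N0 g) ^+ 2 <= B ^+ 2.
  by rewrite ler_sqr ?nnegrE ?divr_ge0 ?ipnorm_ge0.
rewrite B_sqr expr_div_n ler_pdivrMr ?exprn_gt0 //.
apply: le_trans (_ : _ <= c1^-1 * (N0 g * N0 (J u) + c2 * N0 (J u) ^+ 2)) _.
  by rewrite ler_pdivlMl // garding_Ainv_embed0.
rewrite [X in _ <= X](_ : _ = c1^-1 * (N0 g * (n00 * N0 g) + c2 * (n00 * N0 g) ^+ 2));
  last by ring.
apply: ler_wpM2l; first by rewrite invr_ge0 ltW.
apply: lerD; first by rewrite ler_wpM2l ?ipnorm_ge0.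
by rewrite ler_wpM2l ?(ltW c2_gt0) ?ler_sqr_nneg ?ipnorm_ge0.
Qed.

Theorem resolvent_norm_bounds :
  (n0H <= ndH /\ ndH <= c1^-1 * (1 + c2 * n0H)) /\
  (n00 <= n0H /\ n0H <= (Num.sqrt c1)^-1 * n00 * Num.sqrt (c2 + n00^-1)).
Proof.
split; split; [exact: opnorm_0_H_le_dual_H | exact: opnorm_dual_H_le
  | exact: opnorm_0_0_le_0_H | exact: opnorm_0_H_le].
Qed.

End GardingResolvent.

Local Close Scope classical_set_scope.
Unset Implicit Arguments. Set Strict Implicit. Set Printing Implicit Defensive.

Theorem lemma3p2 (R : realType)
  (* Hilbert spaces H (carrier V) and H0 (carrier V0), inclusion J : H -> H0 *)
  (V V0 : lmodType R[i]) (ipH : V -> V -> R[i]) (ip0 : V0 -> V0 -> R[i])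
  (hH : hilbert ipH) (hH0 : hilbert ip0)
  (J : V -> V0) (hJlin : clinear J) (hJinj : injective J)
  (hJnorm : forall v, ipnorm ip0 (J v) <= ipnorm ipH v)
  (* D : H -> H0 linear with norm <= 1 *)
  (D : V -> V0) (hDlin : clinear D)
  (hDnorm : forall v, ipnorm ip0 (D v) <= ipnorm ipH v)
  (* b continuous sesquilinear form on H *)
  (b : V -> V -> R[i])
  (hb1 : forall w, clinear (fun u => b u w))
  (hb2 : forall u, cantilinear (b u))
  (hb3 : exists Cb : R, forall u v,
      cabs (b u v) <= Cb * ipnorm ipH u * ipnorm ipH v)
  (* mu_l^{-1}, eps_l : H0 -> H0 bounded linear, l = 1, 2 *)
  (muinv eps : nat -> V0 -> V0)
  (hmu : forall l, (l = 1 \/ l = 2)%N -> bounded_op ip0 ip0 (muinv l))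
  (heps : forall l, (l = 1 \/ l = 2)%N -> bounded_op ip0 ip0 (eps l))
  (* Garding-type inequalities *)
  (CG1 CG2 : nat -> R)
  (hCG1 : forall l, (l = 1 \/ l = 2)%N -> 0 < CG1 l)
  (hCG2 : forall l, (l = 1 \/ l = 2)%N -> 0 < CG2 l)
  (hG : forall l, (l = 1 \/ l = 2)%N -> forall v : V,
      cabs (aform ip0 J D b (muinv l) (eps l) v v
            + ((CG2 l * ipnorm ip0 (J v) ^+ 2)%:C)%C)
      >= CG1 l * ipnorm ipH v ^+ 2)
  (* the statement, for a given l in {1,2} *)
  (l : nat) (hl : (l = 1 \/ l = 2)%N)
  (* A_l^{-1} : H^* -> H exists (as a bounded operator) *)
  (Ainv : (V -> R[i]) -> V)
  (hAinv1 : forall f, in_dual ipH f ->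
      (fun v => aform ip0 J D b (muinv l) (eps l) (Ainv f) v) = f)
  (hAinv2 : forall u, Ainv (fun v => aform ip0 J D b (muinv l) (eps l) u v) = u)
  (hAinvb : exists M : R, forall f, in_dual ipH f ->
      ipnorm ipH (Ainv f) <= M * dual_norm ipH f) :
  let ndH := opnorm_dual_H ipH Ainv in
  let n0H := opnorm_0_H ipH ip0 J Ainv in
  let n00 := opnorm_0_0 ip0 J Ainv in
  (n0H <= ndH /\ ndH <= (CG1 l)^-1 * (1 + CG2 l * n0H)) /\
  (n00 <= n0H /\
   n0H <= (Num.sqrt (CG1 l))^-1 * n00 * Num.sqrt (CG2 l + n00^-1)).
Proof.
move=> ndH n0H n00.
have [[ipH_inner ipH_compl] [ip0_inner _]] := (hH, hH0).
have [Cb b_bounded] := hb3.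
have [mu_lin [Mmu mu_bounded]] := hmu l hl.
have [eps_lin [Meps eps_bounded]] := heps l hl.
have [MA Ainv_bounded] := hAinvb.
exact: (resolvent_norm_bounds ipH_inner ipH_compl ip0_inner hJlin hJnorm hDlin hDnorm
  hb1 hb2 b_bounded mu_lin mu_bounded eps_lin eps_bounded (hCG1 l hl) (hCG2 l hl)
  (hG l hl) hAinv1 hAinv2 Ainv_bounded).
Qed.
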